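(* Let $1\le m<n$. Fix $\mathbf s$ and valuations $v_1,\dots,v_n$, rename the bidders so that $v_1(\mathbf s)\ge\cdots\ge v_n(\mathbf s)$, and let $k=\max\{i:v_i(\mathbf s)>v_m(\mathbf s)/2\}$. Then for every $i\in[n]$, $$\mathbb E_{r,\pi}[c^m_i]\le\frac{m}{i(i+1)}+\frac{m}{k+1}+\sum_{j\in[k]\setminus\{i\}}\frac{m}{j(j+1)}\log_2^\dagger\!\left(\frac{v_i(\mathbf s)}{\underline v_j^{(i)}(\mathbf s)}\right).$$
   Context: $n$ bidders, signals $s_i\in S_i\subseteq\mathbb R$, valuations $v_i:\mathbf S\to\mathbb R_{>0}$. Lower estimates $\underline v_j^{(i)}(\mathbf s)=\inf_{o_i\in S_i}v_j(o_i,\mathbf s_{-i})$. $\log_2^\dagger(\alpha)=\max(0,\min(1,\log_2\alpha))$, with $a/0=\infty$, $\log_2\infty=\infty$. For $r\in[0,1)$, $w>0$: $f_r(w)=2^{r+k'}$ for the integer $k'$ with $2^{r+k'}\le w<2^{r+k'+1}$; $f_r(0)=0$. For a permutation $\pi$ of $[n]$, $a$ associated with bidder $i$ and $b$ with bidder $j$: $a>_\pi b$ iff $a>b$, or $a=b$ and $\pi(i)>\pi(j)$. $c^m_i(r,\pi)=1$ iff $f_r(v_i(\mathbf s))>_\pi f_r(\underline v_j^{(i)}(\mathbf s))$ for at least $n-m$ bidders $j\ne i$, else $0$; $r\sim U[0,1)$, $\pi$ uniform, independent. *)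

From HB Require Import structures.
From mathcomp Require Import all_boot all_order all_algebra all_fingroup.
From mathcomp Require Import all_classical all_reals all_analysis.
Set Implicit Arguments. Unset Strict Implicit. Unset Printing Implicit Defensive.
Import Order.TTheory GRing.Theory Num.Theory.
Local Open Scope ring_scope.
Local Open Scope classical_set_scope.

Section AuctionDefs.
Variables (R : realType) (n : nat).

Definition upd (s : 'I_n -> R) (i : 'I_n) (o : R) : 'I_n -> R :=
  fun l => if l == i then o else s l.

Definition lower_est (S : 'I_n -> set R) (v : 'I_n -> ('I_n -> R) -> R)
  (s : 'I_n -> R) (i j : 'I_n) : R :=
  inf [set v j (upd s i o) | o in S i].

Definition log2 (x : R) : R := ln x / ln 2.

(* log2^dagger (a / b) = max(0, min(1, log2 (a/b))), with a/0 = oo, log2 oo = oo *)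
Definition log2dag_ratio (a b : R) : R :=
  if b == 0 then 1 else Num.max 0 (Num.min 1 (log2 (a / b))).

(* f_r(w) = 2^(r+k') for the integer k' with 2^(r+k') <= w < 2^(r+k'+1),
   i.e. k' = floor(log2 w - r); f_r(0) = 0 *)
Definition fr (r w : R) : R :=
  if w <= 0 then 0 else 2 `^ (r + (Num.floor (log2 w - r))%:~R).

Definition gtpi (p : {perm 'I_n}) (a : R) (i : 'I_n) (b : R) (j : 'I_n) : bool :=
  (b < a) || ((a == b) && (p j < p i)%N).

Definition cm (S : 'I_n -> set R) (v : 'I_n -> ('I_n -> R) -> R)
  (s : 'I_n -> R) (mm : nat) (i : 'I_n) (r : R) (p : {perm 'I_n}) : R :=
  if (n - mm <= #|[set j : 'I_n | (j != i) &&
        gtpi p (fr r (v i s)) i (fr r (lower_est S v s i j)) j]|)%N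
  then 1 else 0.

Definition Ecm (S : 'I_n -> set R) (v : 'I_n -> ('I_n -> R) -> R)
  (s : 'I_n -> R) (mm : nat) (i : 'I_n) : R :=
  (n`!%:R)^-1 * \sum_(p : {perm 'I_n})
     Rintegral (@lebesgue_measure R) [set r : R | 0 <= r < 1]
               (fun r => cm S v s mm i r p).

(* k = max { i (1-based) : v_i(s) > v_m(s)/2 }, m given as a 0-based index *)
Definition kidx (vals : 'I_n -> R) (m : 'I_n) : nat :=
  \max_(l < n | vals m / 2 < vals l) l.+1.

End AuctionDefs.

(* For a fixed shift r, call D the set of bidders j <= k, j <> i, whose rounded
   lower estimate f_r(lower_j) is not below f_r(v_i).  Bidder i beats such a j
   only through the tie-break of pi, so i beats n - m bidders only if it is
   among the m highest of D + {i} in the order pi, which has probability at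
   most m / (|D| + 1).  As the weights 1/(j(j+1)) decrease and telescope, this
   is at most m/(i(i+1)) + m/(k+1) + sum of m/(j(j+1)) over the j <= k outside
   D.  Finally j lies outside D only if f_r(v_i) > f_r(lower_j), an event of
   probability at most log2^dagger(v_i / lower_j) for r uniform in [0, 1). *)

From HB Require Import structures.
From mathcomp Require Import all_boot all_order all_algebra all_fingroup.
From mathcomp Require Import all_classical all_reals all_analysis.
From mathcomp Require Import measurable_realfun.
From mathcomp Require Import ring lra zify.
Import Order.TTheory GRing.Theory Num.Theory.

Set Implicit Arguments.
Unset Strict Implicit.
Unset Printing Implicit Defensive.

Section TopRanked.
Variable n : nat.
Implicit Types (A : {set 'I_n}) (M : nat) (p : {perm 'I_n}) (x i : 'I_n).

Definition top_ranked A M p x := (#|[set y in A | p x < p y]| < M)%N.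

Lemma card_top_ranked_le A M p : (#|[set x in A | top_ranked A M p x]| <= M)%N.
Proof.
set T := [set x in A | _].
have [->|[x0 x0T]] := set_0Vmem T; first by rewrite cards0.
have [x xT xmin] := arg_minnP (fun x => p x) x0T.
have /subset_leq_card : T :\ x \subset [set y in A | p x < p y].
  apply/fintype.subsetP => y; rewrite in_setD1 => /andP[yx yT].
  move: (yT); rewrite !inE => /andP[yA _]; rewrite yA ltn_neqAle xmin // andbT.
  by apply: contra yx => /eqP/val_inj/perm_inj ->.
have {}xT : x \in T := xT; have := xT; rewrite inE => /andP[_ xtop].
by rewrite (cardsD1 x T) xT add1n => h; exact: leq_ltn_trans h xtop.
Qed.

Lemma card_top_ranked_perm_eq A M x i : i \in A -> x \in A ->
  #|[set p | top_ranked A M p x]| = #|[set p | top_ranked A M p i]|.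
Proof.
move=> iA xA; set t := tperm i x.
have tA y : (t y \in A) = (y \in A).
  by rewrite /t; case: tpermP => [->|->|//]; rewrite ?iA ?xA.
have -> : [set p | top_ranked A M p x] =
          (fun p => (t * p)%g) @^-1: [set p | top_ranked A M p i].
  apply/setP => p; rewrite !inE /top_ranked permM tpermL.
  suff -> : [set y in A | p x < (t * p)%g y] = t @^-1: [set y in A | p x < p y].
    by rewrite card_preimset //; exact: perm_inj.
  by apply/setP => y; rewrite !inE permM tA.
by rewrite card_preimset //; exact: mulgI.
Qed.

(* Double counting of the pairs (p, x) with x top-ranked in A under p; by
   symmetry each x in A is top-ranked for the same number of p. *)
Lemma card_top_ranked_perm A M i : i \in A ->
  (#|[set p | top_ranked A M p i]| * #|A| <= n`! * M)%N.
Proof.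
move=> iA.
have -> : (#|[set p | top_ranked A M p i]| * #|A|
           = \sum_(x in A) #|[set p | top_ranked A M p x]|)%N.
  rewrite (eq_bigr (fun=> #|[set p | top_ranked A M p i]|)) ?sum_nat_const 1?mulnC //.
  by move=> x xA; exact: card_top_ranked_perm_eq.
have -> : (\sum_(x in A) #|[set p | top_ranked A M p x]|
           = \sum_(p : {perm 'I_n}) #|[set x in A | top_ranked A M p x]|)%N.
  rewrite (eq_bigr (fun x => \sum_(p : {perm 'I_n}) (top_ranked A M p x : nat))).
    rewrite exchange_big /=; apply: eq_bigr => p _.
    rewrite -sum1dep_card big_mkcond [RHS]big_mkcond /=.
    by apply: eq_bigr => x _; case: (x \in A); case: top_ranked.
  move=> x _; rewrite -sum1dep_card big_mkcond /=.
  by apply: eq_bigr => p _; case: top_ranked.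
rewrite -card_Sn -sum_nat_const; apply: leq_sum => p _.
exact: card_top_ranked_le.
Qed.

End TopRanked.

Local Open Scope ring_scope.

Section HarmonicWeights.
Variable R : realFieldType.

Definition harm_weight (j : nat) : R := ((j.+1 * j.+2)%N%:R)^-1.

Lemma harm_weightE j : harm_weight j = (j.+1%:R)^-1 - (j.+2%:R)^-1.
Proof.
rewrite /harm_weight natrM -[j.+2]addn1 natrD.
by field; rewrite !gt_eqF //; have := ler0n R j; lra.
Qed.

Lemma harm_weight_ge0 j : 0 <= harm_weight j.
Proof. by rewrite invr_ge0 ler0n. Qed.

Lemma harm_weight_le a b : (a <= b)%N -> harm_weight b <= harm_weight a.
Proof.
move=> ab; rewrite lef_pV2 ?posrE ?ltr0n ?muln_gt0 // ler_nat.
by apply: leq_mul; rewrite ltnS.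
Qed.

Lemma sum_harm_weight k : \sum_(j < k) harm_weight j = 1 - (k.+1%:R)^-1.
Proof.
elim: k => [|k IH]; first by rewrite big_ord0 invr1 subrr.
by rewrite big_ord_recr /= IH harm_weightE addrA subrK.
Qed.

(* Since the weights decrease, a sum over d distinct indices is at most the
   sum over 0, ..., d-1, which telescopes to 1 - 1/(d+1). *)
Lemma sum_harm_weight_seq_le N (s : seq nat) : uniq s -> all (fun x => x < N)%N s ->
  \sum_(x <- s) harm_weight x + ((size s).+1%:R)^-1 <= 1.
Proof.
elim: N s => [|N IH] s us sN.
  by case: s us sN => [|x s] //= _ _; rewrite big_nil add0r invr1.
have [Ns|Nns] := boolP (N \in s); last first.
  apply: IH => //; apply/allP => y ys; move: (allP sN y ys).
  by rewrite ltnS leq_eqVlt => /orP[/eqP ey|//]; rewrite -ey ys in Nns.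
have pe := perm_to_rem Ns.
rewrite (perm_big _ pe) (perm_size pe) big_cons /=.
set s' := rem N s.
have us' : uniq s' by rewrite rem_uniq.
have s'N : all (fun y => y < N)%N s'.
  apply/allP => y ys'; have ys := mem_rem ys'.
  move: (allP sN y ys); rewrite ltnS leq_eqVlt => /orP[/eqP ey|//].
  by move: ys'; rewrite ey (mem_rem_uniqF N us).
have szN : (size s' <= N)%N.
  rewrite -(size_iota 0 N); apply: uniq_leq_size => // y ys'.
  by rewrite mem_iota add0n (allP s'N y ys').
have hN : harm_weight N <= ((size s').+1%:R)^-1 - ((size s').+2%:R)^-1.
  by rewrite -harm_weightE harm_weight_le.
apply: le_trans (IH s' us' s'N).
by rewrite addrAC [X in _ <= X]addrC lerD2r -lerBrDr.
Qed.

Lemma sum_harm_weight_set_le n (D : {set 'I_n}) :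
  \sum_(j in D) harm_weight j + ((#|D|).+1%:R)^-1 <= 1.
Proof.
rewrite -big_enum -(big_map (@nat_of_ord n) xpredT) cardE -(size_map (@nat_of_ord n)).
apply: (@sum_harm_weight_seq_le n); last by apply/allP => x /mapP[y _ ->].
by rewrite map_inj_uniq ?enum_uniq //; exact: val_inj.
Qed.

Lemma invS_card_le_harm_weight n (k : nat) (i : 'I_n) (P : pred 'I_n) : (k <= n)%N ->
  ((#|[set j : 'I_n | [&& (j < k)%N, j != i & ~~ P j]]|).+1%:R)^-1 <=
  harm_weight i + (k.+1%:R)^-1 +
  \sum_(j < n | (j.+1 <= k)%N && (j != i)) harm_weight j * (P j)%:R.
Proof.
move=> kn; set D := [set j | _].
have := sum_harm_weight_set_le D.
have -> : \sum_(j < n | (j.+1 <= k)%N && (j != i)) harm_weight j * (P j)%:R =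
          \sum_(j < n | (j.+1 <= k)%N && (j != i)) harm_weight j - \sum_(j in D) harm_weight j.
  rewrite [X in _ = X - _](bigID P) /= [X in _ = _ - X](eq_bigl (fun j : 'I_n =>
    ((j.+1 <= k)%N && (j != i)) && ~~ P j)); last by move=> j; rewrite inE andbA.
  rewrite addrK [RHS]big_mkcondr /=.
  by apply: eq_bigr => j _; case: (P j); rewrite ?mulr1 ?mulr0.
have : \sum_(j < n | (j.+1 <= k)%N) harm_weight j = 1 - (k.+1%:R)^-1.
  by rewrite -sum_harm_weight (big_ord_widen n harm_weight kn).
have : \sum_(j < n | (j.+1 <= k)%N) harm_weight j <=
       harm_weight i + \sum_(j < n | (j.+1 <= k)%N && (j != i)) harm_weight j.
  have [ik|ik] := boolP (i.+1 <= k)%N; first by rewrite (bigD1 i).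
  rewrite (eq_bigl (fun j : 'I_n => (j.+1 <= k)%N && (j != i))).
    by rewrite lerDr harm_weight_ge0.
  by move=> j /=; case: eqP => [->|]; rewrite ?andbT // (negbTE ik).
move: (\sum_(j in D) _) (\sum_(j < n | _ && _) _) (\sum_(j < n | _) _) => a b c.
move: (harm_weight i) (#|D|.+1%:R^-1) (k.+1%:R^-1) => h d e; lra.
Qed.

End HarmonicWeights.

Arguments harm_weight {R} j.

Section PermutationAverage.
Variables (R : realType) (n : nat).
Implicit Types (A : R) (B : 'I_n -> R) (i : 'I_n) (p : {perm 'I_n}).

Definition n_beaten p A i B := #|[set j | (j != i) && gtpi p A i (B j) j]|.

(* Bidder i beats a bidder j with A <= B j only through the tie-break, that is
   only if p j < p i. *)
Lemma beats_top_ranked M A B i (k : nat) p : (0 < M <= n)%N ->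
  (n - M <= n_beaten p A i B)%N ->
  top_ranked (i |: [set j : 'I_n | [&& (j < k)%N, j != i & ~~ (B j < A)]]) M p i.
Proof.
move=> /andP[M0 Mn] hb; rewrite /top_ranked.
have /subset_leq_card : [set y in i |: [set j : 'I_n | [&& (j < k)%N, j != i & ~~ (B j < A)]]
    | (p i < p y)%N] \subset [set~ i] :\: [set j | (j != i) && gtpi p A i (B j) j].
  apply/fintype.subsetP => y; rewrite !inE => /andP[/orP[/eqP ->|]]; first by rewrite ltnn.
  move=> /and3P[_ yi yA] piy; rewrite yi /= /gtpi negb_or (negbTE yA) /=.
  by rewrite negb_and -leqNgt (ltnW piy) orbT.
rewrite cardsD cardsC1 card_ord (finset.setIidPr _); last first.
  by apply/fintype.subsetP => j; rewrite !inE => /andP[].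
move: hb; rewrite /n_beaten; set b := #|[set j | (j != i) && _]|; set c := #|_|.
clearbody b c; lia.
Qed.

Lemma sum_perm_beats_le M A B i (k : nat) : (0 < M <= n)%N -> (k <= n)%N ->
  \sum_p ((n - M <= n_beaten p A i B)%N%:R : R) <=
  n`!%:R * (M%:R * harm_weight i + M%:R / k.+1%:R +
    \sum_(j < n | (j.+1 <= k)%N && (j != i)) M%:R * harm_weight j * (B j < A)%R%:R).
Proof.
move=> hM kn; set D := [set j : 'I_n | [&& (j < k)%N, j != i & ~~ (B j < A)]].
have iD : i \notin D by rewrite inE eqxx andbF.
have hcard : (#|[set p | (n - M <= n_beaten p A i B)%N]| * #|D|.+1 <= n`! * M)%N.
  apply: leq_trans (card_top_ranked_perm M (setU11 i D)).
  rewrite cardsU1 iD add1n leq_mul2r; apply/orP; right.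
  apply/subset_leq_card/fintype.subsetP => p; rewrite !inE.
  exact: beats_top_ranked.
have -> : \sum_p ((n - M <= n_beaten p A i B)%N%:R : R) =
          #|[set p | (n - M <= n_beaten p A i B)%N]|%:R.
  rewrite -sum1_card natr_sum [RHS]big_mkcond /=.
  by apply: eq_bigr => p _; rewrite inE; case: (_ <= _)%N.
have := invS_card_le_harm_weight R i (fun j => B j < A) kn; rewrite -/D => hD.
apply: le_trans (_ : _ <= n`!%:R * M%:R * (#|D|.+1%:R)^-1) _.
  by rewrite ler_pdivlMr ?ltr0n // -!natrM ler_nat.
rewrite -mulrA ler_wpM2l ?ler0n //.
under [X in _ <= _ + X]eq_bigr do rewrite -mulrA.
by rewrite -mulr_sumr -!mulrDr ler_wpM2l ?ler0n.
Qed.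
End PermutationAverage.

Section RandomThreshold.
Local Open Scope classical_set_scope.
Variable R : realType.
Implicit Types (a b r t u x y : R).
Notation mu := (@lebesgue_measure R).

Lemma unit_coE : [set r : R | 0 <= r < 1] = [set` `[0, 1[%R].
Proof. by apply/seteqP; split => x; rewrite /= in_itv. Qed.

Lemma measurable_unit_co : measurable [set r : R | 0 <= r < 1].
Proof. by rewrite unit_coE; exact: measurable_itv. Qed.

Lemma lebesgue_unit_co : mu [set r : R | 0 <= r < 1] = 1%:E.
Proof. by rewrite unit_coE lebesgue_measure_itv /= lte_fin ltr01 sube0. Qed.

Lemma lebesgue_itv_le (b1 b2 : bool) x y : x <= y ->
  (mu [set` Interval (BSide b1 x) (BSide b2 y)] <= (y - x)%:E)%E.
Proof.
move=> xy; rewrite lebesgue_measure_itv /=.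
by case: ifP => _; rewrite ?EFinB // lee_fin subr_ge0.
Qed.

(* X lies in ]u, t] when u >= 0, and in [0, t] U ]u + 1, 1[ when u < 0. *)
Lemma lebesgue_window_le u t (X : set R) : measurable X -> 0 <= t -> u <= t ->
  (forall r, X r -> [/\ 0 <= r < 1, u < r & r <= t \/ u + 1 < r]) ->
  (mu X <= (t - u)%:E)%E.
Proof.
move=> mX t0 ut hX; have [u0|u0] := leP 0 u.
  apply: le_trans (lebesgue_itv_le false false ut).
  apply: le_measure; rewrite ?inE //=.
  move=> r /hX[/andP[_ r1] ur [rt|]]; first by rewrite /= in_itv /= ur rt.
  lra.
apply: (@le_trans _ _ (mu [set` `[0, t]%R] + mu [set` `]u + 1, 1[%R])%E).
  apply: le_trans (measureU2 _ _ _); rewrite ?inE; try exact: measurable_itv.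
  apply: le_measure; rewrite ?inE //=.
    by apply: measurableU; exact: measurable_itv.
  move=> r /hX[/andP[r0 r1] _ [rt|ur]]; [left|right]; by rewrite /= in_itv /= ?r0 ?rt ?ur ?r1.
apply: le_trans (leeD (lebesgue_itv_le true false t0) (lebesgue_itv_le false true _)) _.
  lra.
by rewrite -EFinD lee_fin; lra.
Qed.

Lemma ln2_gt0 : 0 < ln (2 : R).
Proof. by apply: ln_gt0; rewrite ltr1n. Qed.

Lemma lt_powR2 x y : (2 : R) `^ x < 2 `^ y -> x < y.
Proof. by rewrite /powR pnatr_eq0 ltr_expR ltr_pM2r // ln2_gt0. Qed.

Lemma measurable_fr w : measurable_fun [set: R] (fun r => fr r w).
Proof.
have [w0|w0] := boolP (w <= 0).
  rewrite (_ : (fun r => fr r w) = cst 0); first exact: measurable_cst.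
  by apply/funext => r; rewrite /fr w0.
rewrite (_ : (fun r => fr r w) = fun r => 2 `^ (r + (Num.floor (log2 w - r))%:~R)).
  apply: measurableT_comp; first exact: measurable_powRr.
  apply: measurable_funD => //; apply: nonincreasing_measurable => // x y xy.
  by rewrite ler_int le_floor // lerD2l lerN2.
by apply/funext => r; rewrite /fr (negbTE w0).
Qed.

Lemma measurable_fr_lt a b : measurable [set r : R | fr r b < fr r a].
Proof.
have := measurable_fun_ltr (measurable_fr b) (measurable_fr a) measurableT.
move/(_ [set true] I); rewrite setTI.
by congr measurable; apply/seteqP; split => x /=.
Qed.

Lemma fr_lt_floor r a b : 0 < a -> 0 < b -> fr r b < fr r a ->
  log2 b - r < (Num.floor (log2 a - r))%:~R.
Proof.
move=> a0 b0; rewrite /fr !ifF ?(lt_geF a0) ?(lt_geF b0) //.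
move/lt_powR2; rewrite ltrD2l ltr_int => h.
by apply: lt_le_trans (floorD1_gt _) _; rewrite ler_int lezD1.
Qed.

(* The integer witnessing [x - r < z <= y - r] is either floor y, or smaller. *)
Lemma lt_floor_window x y r : 0 <= r -> x - r < (Num.floor (y - r))%:~R ->
  x - (Num.floor y)%:~R < r /\
  (r <= y - (Num.floor y)%:~R \/ x - (Num.floor y)%:~R + 1 < r).
Proof.
move=> r0 h; set z := Num.floor (y - r) in h; set z0 := Num.floor y.
have zz0 : z <= z0 by apply: le_floor; lra.
have zyr : (z%:~R : R) <= y - r by apply: floor_le.
have zz0R : (z%:~R : R) <= z0%:~R by rewrite ler_int.
split; first lra.
have [z0z|zz0lt] := leP z0 z.
  left; suff : (z0%:~R : R) <= z%:~R by lra.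
  by rewrite ler_int.
right; suff : ((z + 1)%:~R : R) <= z0%:~R by rewrite intrD; lra.
by rewrite ler_int lezD1.
Qed.

Lemma lebesgue_fr_lt_le a b : 0 < a -> 0 <= b ->
  (mu ([set r | (fr r b < fr r a)%R] `&` [set r | (0 <= r < 1)%R]) <= (log2dag_ratio a b)%:E)%E.
Proof.
move=> a0 b0; set X := _ `&` _.
have le1 : (mu X <= 1%:E)%E.
  rewrite -lebesgue_unit_co; apply: le_measure; rewrite ?inE; last exact: subIsetr.
    exact: measurableI (measurable_fr_lt a b) measurable_unit_co.
  exact: measurable_unit_co.
rewrite /log2dag_ratio; have [//|bn0] := eqVneq b 0.
have bp : 0 < b by rewrite lt_neqAle eq_sym bn0.
have -> : log2 (a / b) = log2 a - log2 b by rewrite /log2 ln_div ?posrE // mulrBl.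
have [d0|d0] := leP (log2 a - log2 b) 0.
  rewrite (_ : X = set0) ?measure0 ?lee_fin ?le_max ?lexx //.
  apply/seteqP; split => // r [/= /(fr_lt_floor a0 bp) h _].
  by have := floor_le (log2 a - r); lra.
have [d1|d1] := leP 1 (log2 a - log2 b); first by rewrite (max_idPr ler01).
rewrite (max_idPr (ltW d0)).
set u := log2 b - (Num.floor (log2 a))%:~R; set t := log2 a - (Num.floor (log2 a))%:~R.
have t0 : 0 <= t by rewrite subr_ge0 floor_le.
have -> : log2 a - log2 b = t - u by rewrite /t /u; ring.
apply: lebesgue_window_le => //; first exact: measurableI (measurable_fr_lt a b) measurable_unit_co.
  by rewrite /u /t; lra.
move=> r [/= /(fr_lt_floor a0 bp) h /andP[r0 r1]].
by have [ur rtu] := lt_floor_window r0 h; split => //; apply/andP.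
Qed.
End RandomThreshold.

Section FiniteAverageIntegral.
Local Open Scope classical_set_scope.
Context d (T : measurableType d) (R : realType) (mu : {measure set T -> \bar R}).
Variables (D : set T) (I : finType).
Hypothesis mD : measurable D.

(* The averaged integrals are finite because the bound forces the integral of
   the (nonnegative) sum to be finite. *)
Lemma mean_Rintegral_le (h : I -> T -> R) (G : T -> R) (N B : R) : 0 < N ->
  (forall p, measurable_fun D (h p)) -> (forall p x, D x -> 0 <= h p x) ->
  measurable_fun D G -> (forall x, D x -> \sum_p h p x <= N * G x) ->
  (\int[mu]_(x in D) (G x)%:E <= B%:E)%E ->
  N^-1 * \sum_p \int[mu]_(x in D) h p x <= B.
Proof.
move=> N0 mh h0 mG hG GB.
have G0 x : D x -> 0 <= G x.
  move=> Dx; rewrite -(pmulr_rge0 _ N0); apply: le_trans (hG x Dx).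
  by apply: sumr_ge0 => p _; exact: h0.
have sumE : (\sum_p \int[mu]_(x in D) (h p x)%:E =
             \int[mu]_(x in D) (\sum_p h p x)%:E)%E.
  under [RHS]eq_integral do rewrite -sumEFin.
  by rewrite ge0_integral_sum // => p; exact/measurable_EFinP.
have sum_le : (\sum_p \int[mu]_(x in D) (h p x)%:E <= (N * B)%:E)%E.
  rewrite sumE; apply: le_trans (_ : _ <= \int[mu]_(x in D) (N * G x)%:E)%E _.
    apply: ge0_le_integral => //.
    - by move=> x Dx; rewrite lee_fin sumr_ge0 // => p _; exact: h0.
    - by apply/measurable_EFinP; exact: measurable_sum.
    - by apply/measurable_EFinP; exact: measurable_funM.
  under eq_integral do rewrite EFinM.
  rewrite ge0_integralZl_EFin ?(ltW N0) //; last exact/measurable_EFinP.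
  by rewrite EFinM lee_wpmul2l // lee_fin ltW.
have int_ge0 p : (0 <= \int[mu]_(x in D) (h p x)%:E)%E.
  by apply: integral_ge0 => x Dx; rewrite lee_fin h0.
have hfin p : (\int[mu]_(x in D) (h p x)%:E)%E \is a fin_num.
  rewrite ge0_fin_numE // (le_lt_trans _ (ltry (N * B))) //.
  by apply: le_trans sum_le; rewrite (bigD1 p) //= leeDl // sume_ge0.
rewrite ler_pdivrMl //.
rewrite /Rintegral sum_fine => [|p _]; last exact: hfin.
rewrite -lee_fin fineK //; apply/sum_fin_numP => p _ _; exact: hfin.
Qed.

Lemma indic_predE (P : T -> bool) x : \1_[set x | P x] x = (P x)%:R :> R.
Proof. by rewrite indicE /in_mem /= /in_set asboolb. Qed.

Lemma integral_scaled_indic_le (c l : R) (X : set T) : 0 <= c -> measurable X ->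
  (mu (X `&` D) <= l%:E)%E -> (\int[mu]_(x in D) (c * \1_X x)%:E <= (c * l)%:E)%E.
Proof.
move=> c0 mX hX; under eq_integral do rewrite EFinM.
rewrite ge0_integralZl_EFin //; last exact/measurable_EFinP/measurable_indic.
by rewrite integral_indic // EFinM lee_wpmul2l ?lee_fin.
Qed.

Lemma measurable_fun_step (J : pred I) (c0 : R) (c : I -> R) (X : I -> set T) :
  (forall j, measurable (X j)) ->
  measurable_fun D (fun x => c0 + \sum_(j | J j) c j * \1_(X j) x).
Proof.
move=> mX; apply: measurable_funD => //; under eq_fun do rewrite big_mkcond /=.
apply: measurable_sum => j; case: (J j) => //.
by apply: measurable_funM => //; exact: measurable_indic.
Qed.

Lemma integral_step_le (J : pred I) (c0 : R) (c : I -> R) (X : I -> set T) (l : I -> R) :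
  mu D = 1%:E -> 0 <= c0 -> (forall j, 0 <= c j) -> (forall j, measurable (X j)) ->
  (forall j, J j -> (mu (X j `&` D) <= (l j)%:E)%E) ->
  (\int[mu]_(x in D) (c0 + \sum_(j | J j) c j * \1_(X j) x)%:E
     <= (c0 + \sum_(j | J j) c j * l j)%:E)%E.
Proof.
move=> muD c00 c_ge0 mX hl.
have mS j : measurable_fun D (fun x => (c j * \1_(X j) x)%:E).
  by apply/measurable_EFinP/measurable_funM => //; exact: measurable_indic.
under eq_integral do rewrite EFinD big_mkcond -sumEFin /=.
rewrite ge0_integralD //; last 2 first.
- by move=> x _; apply: sume_ge0 => j _; case: (J j); rewrite // lee_fin mulr_ge0.
- by apply: emeasurable_sum => j; case: (J j) => //; exact: measurable_cst.
rewrite integral_cst // muD mule1 EFinD leeD2l // ge0_integral_sum //; last 2 first.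
- by move=> j; case: (J j) => //; exact: measurable_cst.
- by move=> j x _; case: (J j); rewrite // lee_fin mulr_ge0.
rewrite -sumEFin [X in (_ <= X)%E]big_mkcond /=; apply: lee_sum => j _.
case: (boolP (J j)) => Jj; last by rewrite integral0.
exact: integral_scaled_indic_le (hl j Jj).
Qed.
End FiniteAverageIntegral.

Section Auction.
Local Open Scope classical_set_scope.
Variables (R : realType) (n : nat).
Variables (S : 'I_n -> set R) (v : 'I_n -> ('I_n -> R) -> R) (s : 'I_n -> R).

Lemma lower_est_ge0 i j : (forall l, S l (s l)) ->
  (forall j (t : 'I_n -> R), (forall l, S l (t l)) -> 0 < v j t) ->
  0 <= lower_est S v s i j.
Proof.
move=> hS hv; apply: lb_le_inf; first by exists (v j (upd s i (s i))), (s i).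
move=> _ [] o So <-; apply/ltW/hv => l; rewrite /upd.
by case: eqP => [->|].
Qed.

Lemma card_classicE (Q : pred 'I_n) : #|[set j | Q j]| = #|[set j | Q j]%SET|.
Proof. by apply: eq_card => j; rewrite finset.inE /in_mem /= /in_set asboolb. Qed.

Lemma cmE mm i r p : cm S v s mm i r p =
  ((n - mm <= n_beaten p (fr r (v i s)) i (fun j => fr r (lower_est S v s i j)))%N)%:R.
Proof. by rewrite /cm card_classicE /n_beaten; case: (_ <= _)%N. Qed.

Lemma measurable_cm mm i p : measurable_fun [set: R] (fun r => cm S v s mm i r p).
Proof.
rewrite /cm; apply: measurable_fun_ifT => //.
set Q := fun j r => (j != i) && gtpi p (fr r (v i s)) i (fr r (lower_est S v s i j)) j.
rewrite (_ : (fun r => _) = fun r => ((n - mm)%:R : R) <= \sum_j (if Q j r then 1 else 0)).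
  apply: measurable_fun_ler => //; apply: measurable_sum => j.
  apply: measurable_fun_ifT => //; apply: measurable_and => //.
  apply: measurable_or; first exact: measurable_fun_ltr (measurable_fr _) (measurable_fr _).
  apply: measurable_and => //.
  exact: measurable_fun_eqr (measurable_fr _) (measurable_fr _).
apply/funext => r; rewrite card_classicE -(ler_nat R) -sum1_card natr_sum big_mkcond /=.
by congr (_ <= _); apply: eq_bigr => j _; rewrite finset.inE.
Qed.

End Auction.

Local Open Scope classical_set_scope.

Theorem mainTheorem17 (R : realType) (n : nat) (m : 'I_n)
  (S : 'I_n -> set R) (v : 'I_n -> ('I_n -> R) -> R) (s : 'I_n -> R) :
  (m.+1 < n)%N ->
  (forall l, S l (s l)) ->
  (forall j (t : 'I_n -> R), (forall l, S l (t l)) -> 0 < v j t) ->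
  (forall i j : 'I_n, (i <= j)%N -> v j s <= v i s) ->
  forall i : 'I_n,
    Ecm S v s m.+1 i <=
      m.+1%:R / (i.+1 * i.+2)%:R
      + m.+1%:R / (kidx (fun l => v l s) m).+1%:R
      + \sum_(j < n | (j.+1 <= kidx (fun l => v l s) m)%N && (j != i))
          m.+1%:R / (j.+1 * j.+2)%:R * log2dag_ratio (v i s) (lower_est S v s i j).
Proof.
move=> mn hS hv _ i; set k := kidx _ m.
have kn : (k <= n)%N by apply/bigmax_leqP => l _; exact: ltn_ord.
have hM : (0 < m.+1 <= n)%N by exact: ltnW.
set X := fun j => [set r : R | (fr r (lower_est S v s i j) < fr r (v i s))%R].
pose G (r : R) : R := m.+1%:R * harm_weight i + m.+1%:R / k.+1%:R +
  \sum_(j < n | (j.+1 <= k)%N && (j != i)) m.+1%:R * harm_weight j * \1_(X j) r.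
rewrite /Ecm; apply: (mean_Rintegral_le (mu := lebesgue_measure) (@measurable_unit_co R)
  (h := fun p r => cm S v s m.+1 i r p) (G := G)).
- by rewrite ltr0n fact_gt0.
- by move=> p; apply: measurable_funS (measurable_cm _ _ _ _ _ _) => //.
- by move=> p r _; rewrite cmE ler0n.
- by rewrite /G; apply: measurable_fun_step => // j; exact: measurable_fr_lt.
- move=> r _; under eq_bigr do rewrite cmE.
  rewrite /G (eq_bigr (fun j : 'I_n => m.+1%:R * harm_weight j *
    (fr r (lower_est S v s i j) < fr r (v i s))%R%:R)) => [|j _]; last by rewrite indic_predE.
  exact: sum_perm_beats_le.
- apply: integral_step_le => //.
  + exact: measurable_unit_co.
  + exact: lebesgue_unit_co.
  + by rewrite addr_ge0 ?mulr_ge0 ?harm_weight_ge0 ?invr_ge0.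
  + by move=> j; rewrite mulr_ge0 ?harm_weight_ge0.
  + by move=> j; exact: measurable_fr_lt.
  + move=> j _; apply: lebesgue_fr_lt_le; [exact: hv | exact: lower_est_ge0].
Qed.
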